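(* For any modal formula $A$, $\mathbf{IL}^-(\mathbf{J2}_{+},\mathbf{J5})\vdash A$ if and only if $A$ is valid in all simplified $\mathbf{IL}^-(\mathbf{J2}_{+},\mathbf{J5})$-frames.
   Context: Modal formulas are built from propositional variables, $\top$, $\bot$ using $\to,\lor,\land$, unary $\Box$ and binary $\rhd$; $\lnot A:=A\to\bot$, $\Diamond A:=\lnot\Box\lnot A$. The logic $\mathbf{IL}^-$ has as axioms all tautologies, $\Box(A\to B)\to(\Box A\to\Box B)$, $\Box(\Box A\to A)\to\Box A$, $(A\rhd C)\land(B\rhd C)\to(A\lor B)\rhd C$, and $\Box\lnot A\leftrightarrow A\rhd\bot$; its rules are modus ponens, necessitation, from $A\to B$ infer $C\rhd A\to C\rhd B$, and from $A\to B$ infer $B\rhd C\to A\rhd C$. $\mathbf{IL}^-(\mathbf{J2}_{+},\mathbf{J5})$ is $\mathbf{IL}^-$ plus the axiom schemes $A\rhd(B\lor C)\land B\rhd C\to A\rhd C$ and $\Diamond A\rhd A$. A simplified $\mathbf{IL}^-(\mathbf{J2}_{+},\mathbf{J5})$-frame is a triple $(W,R,S)$ with $W$ non-empty, $R$ a transitive, conversely well-founded binary relation on $W$, and $S$ a transitive binary relation on $W$ with $R\subseteq S$. Forcing: arbitrary on variables, Boolean clauses as usual, $x\Vdash\Box A$ iff $y\Vdash A$ for all $y$ with $xRy$, and $x\Vdash A\rhd B$ iff for every $y$ with $xRy$ and $y\Vdash A$ there is $z$ with $xRz$, $ySz$, $z\Vdash B$. $A$ is valid in a frame if it is forced at every point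 under every forcing relation. *)

From Stdlib Require Import Relations Wellfounded.

Inductive formula : Type :=
| Var : nat -> formula
| Top : formula
| Bot : formula
| Imp : formula -> formula -> formula
| Or  : formula -> formula -> formula
| And : formula -> formula -> formula
| Box : formula -> formula
| Rhd : formula -> formula -> formula.

Definition Neg (A : formula) : formula := Imp A Bot.
Definition Dia (A : formula) : formula := Neg (Box (Neg A)).
Definition Iff (A B : formula) : formula := And (Imp A B) (Imp B A).

Fixpoint peval (v : formula -> bool) (A : formula) : bool :=
  match A with
  | Var _ => v A
  | Top => true
  | Bot => false
  | Imp B C => implb (peval v B) (peval v C)
  | Or B C => orb (peval v B) (peval v C)
  | And B C => andb (peval v B) (peval v C)
  | Box _ => v A
  | Rhd _ _ => v A
  end.

(* A is a tautology = an instance of a propositional tautology. *)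
Definition tautology (A : formula) : Prop := forall v, peval v A = true.

Inductive prv : formula -> Prop :=
| ax_taut A : tautology A -> prv A
| ax_K A B : prv (Imp (Box (Imp A B)) (Imp (Box A) (Box B)))
| ax_L A : prv (Imp (Box (Imp (Box A) A)) (Box A))
| ax_J3 A B C : prv (Imp (And (Rhd A C) (Rhd B C)) (Rhd (Or A B) C))
| ax_J6 A : prv (Iff (Box (Neg A)) (Rhd A Bot))
| ax_J2p A B C : prv (Imp (And (Rhd A (Or B C)) (Rhd B C)) (Rhd A C))
| ax_J5 A : prv (Rhd (Dia A) A)
| r_mp A B : prv (Imp A B) -> prv A -> prv B
| r_nec A : prv A -> prv (Box A)
| r_R1 A B C : prv (Imp A B) -> prv (Imp (Rhd C A) (Rhd C B))
| r_R2 A B C : prv (Imp A B) -> prv (Imp (Rhd B C) (Rhd A C)).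

Record sframe : Type := {
  W : Type;
  R : W -> W -> Prop;
  S : W -> W -> Prop;
  W_inhabited : inhabited W;
  R_trans : transitive W R;
  R_cwf : well_founded (fun y x => R x y);
  S_trans : transitive W S;
  R_sub_S : forall x y, R x y -> S x y
}.

Fixpoint forces (F : sframe) (V : W F -> nat -> Prop) (x : W F) (A : formula)
  : Prop :=
  match A with
  | Var p => V x p
  | Top => True
  | Bot => False
  | Imp B C => forces F V x B -> forces F V x C
  | Or B C => forces F V x B \/ forces F V x C
  | And B C => forces F V x B /\ forces F V x C
  | Box B => forall y, R F x y -> forces F V y B
  | Rhd B C => forall y, R F x y -> forces F V y B ->
                 exists z, R F x z /\ S F y z /\ forces F V z C
  end.

Definition valid_in (F : sframe) (A : formula) : Prop :=
  forall (V : W F -> nat -> Prop) (x : W F), forces F V x A.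

(* For completeness, a
   non-derivable A is refuted in a canonical frame whose worlds are finite chains
   X0, ..., Xn of maximal consistent sets, each step inheriting every □D and gaining a
   new □D with D from a finite list determined by A; so R, proper extension of chains,
   is conversely well-founded.  Because S is a single relation, the clause "z ⊮ C for
   all z with xRz and ySz" cannot live in y alone: y carries it as an obligation (x, C),
   and obligations are inherited along S.  A failure of B ▷ C at x is witnessed by a
   child of x containing B and □¬B with the new obligation (x, C); if B ▷ C holds at x
   and y ⊩ B for some xRy, a fresh child of x containing C and respecting the obligations
   of y realises it.  That these children are consistent is where J2+, J5 and Löb's
   axiom (to choose □-minimal witnesses) enter. *)

From Stdlib Require Import List Classical ClassicalEpsilon Lia Wf_nat Wellfounded Cantor.
Import ListNotations.

Definition decide (P : Prop) : bool :=
  if excluded_middle_informative P then true else false.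

Lemma decide_true P : decide P = true <-> P.
Proof. unfold decide; destruct (excluded_middle_informative P); intuition discriminate. Qed.

Lemma decide_false P : decide P = false <-> ~ P.
Proof. unfold decide; destruct (excluded_middle_informative P); intuition discriminate. Qed.

(** * Soundness *)

Lemma peval_forces F V x A :
  peval (fun B => decide (forces F V x B)) A = true <-> forces F V x A.
Proof.
  induction A; simpl; [apply decide_true|tauto|intuition discriminate| | |
    |apply decide_true|apply decide_true].
  all: rewrite <- IHA1, <- IHA2;
    destruct (peval _ A1), (peval _ A2); simpl; intuition congruence.
Qed.

Lemma forces_lob F V x A :
  (forall y, R F x y -> (forall z, R F y z -> forces F V z A) -> forces F V y A) ->
  forall y, R F x y -> forces F V y A.
Proof.
  intros H y. induction y as [y IH] using (well_founded_ind (R_cwf F)). intro Rxy.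
  apply (H y Rxy). intros z Ryz. exact (IH z Ryz (R_trans F _ _ _ Rxy Ryz)).
Qed.

Theorem prv_sound A : prv A -> forall F, valid_in F A.
Proof.
  induction 1; intros F V x; simpl in *.
  - apply peval_forces, H.
  - intros H1 H2 y Rxy. exact (H1 y Rxy (H2 y Rxy)).
  - apply forces_lob.
  - intros [H1 H2] y Rxy [Hy|Hy]; eauto.
  - split.
    + intros H y Rxy Hy. destruct (H y Rxy Hy).
    + intros H y Rxy Hy. destruct (H y Rxy Hy) as [z [_ [_ []]]].
  - intros [H1 H2] y Rxy Hy.
    destruct (H1 y Rxy Hy) as [z [Rxz [Syz [Hz|Hz]]]]; [|eauto].
    destruct (H2 z Rxz Hz) as [w [Rxw [Szw Hw]]].
    exists w. split; [exact Rxw|split; [exact (S_trans F _ _ _ Syz Szw)|exact Hw]].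
  - intros y Rxy Hy.
    destruct (classic (exists z, R F y z /\ forces F V z A)) as [[z [Ryz Hz]]|Hn].
    + exists z. split; [exact (R_trans F _ _ _ Rxy Ryz)|split; [exact (R_sub_S F _ _ Ryz)|exact Hz]].
    + destruct Hy. intros z Ryz Hz. eauto.
  - apply IHprv1, IHprv2.
  - intros y _. apply IHprv.
  - intros H1 y Rxy Hy. destruct (H1 y Rxy Hy) as [z [Rxz [Syz Hz]]].
    exists z. split; [exact Rxz|split; [exact Syz|apply IHprv, Hz]].
  - intros H1 y Rxy Hy. exact (H1 y Rxy (IHprv F V y Hy)).
Qed.

(** * Maximal consistent sets *)

Ltac taut := let v := fresh "v" in intro v; unfold Iff, Dia, Neg; simpl;
  repeat match goal with
         | |- context [peval v ?X] => destruct (peval v X)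
         | |- context [v ?X] => destruct (v X)
         end; reflexivity.

Lemma taut_mp1 P Q : tautology (Imp P Q) -> prv P -> prv Q.
Proof. intros T H. exact (r_mp _ _ (ax_taut _ T) H). Qed.

Lemma taut_mp2 P1 P2 Q :
  tautology (Imp P1 (Imp P2 Q)) -> prv P1 -> prv P2 -> prv Q.
Proof. intros T H1 H2. exact (r_mp _ _ (taut_mp1 _ _ T H1) H2). Qed.

Lemma taut_mp3 P1 P2 P3 Q :
  tautology (Imp P1 (Imp P2 (Imp P3 Q))) -> prv P1 -> prv P2 -> prv P3 -> prv Q.
Proof. intros T H1 H2 H3. exact (r_mp _ _ (taut_mp2 _ _ _ T H1 H2) H3). Qed.

Lemma prv_box_mono A B : prv (Imp A B) -> prv (Imp (Box A) (Box B)).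
Proof. intro H. exact (r_mp _ _ (ax_K A B) (r_nec _ H)). Qed.

Lemma prv_box_neg_or A B :
  prv (Imp (Box (Neg (Or A B))) (And (Box (Neg A)) (Box (Neg B)))).
Proof.
  apply taut_mp2 with (Imp (Box (Neg (Or A B))) (Box (Neg A)))
    (Imp (Box (Neg (Or A B))) (Box (Neg B))); [taut| |];
    apply prv_box_mono, ax_taut; taut.
Qed.

Fixpoint big_and (L : list formula) : formula :=
  match L with [] => Top | x :: L => And x (big_and L) end.

Fixpoint big_or (L : list formula) : formula :=
  match L with [] => Bot | x :: L => Or x (big_or L) end.

Lemma big_and_intro G L : (forall x, In x L -> prv (Imp G x)) -> prv (Imp G (big_and L)).
Proof.
  induction L as [|a L IH]; simpl; intro H; [apply ax_taut; taut|].
  apply taut_mp2 with (Imp G a) (Imp G (big_and L)); [taut|apply H|apply IH]; auto.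
Qed.

Lemma big_and_app L1 L2 : prv (Imp (big_and (L1 ++ L2)) (And (big_and L1) (big_and L2))).
Proof.
  induction L1 as [|a L IH]; simpl; [apply ax_taut; taut|].
  apply taut_mp1 with (Imp (big_and (L ++ L2)) (And (big_and L) (big_and L2))); [taut|exact IH].
Qed.

Lemma big_or_in L x : In x L -> prv (Imp x (big_or L)).
Proof.
  induction L as [|a L IH]; simpl; [tauto|]. intros [<-|H]; [apply ax_taut; taut|].
  apply taut_mp1 with (Imp x (big_or L)); [taut|auto].
Qed.

Lemma big_or_elim L G : (forall x, In x L -> prv (Imp x G)) -> prv (Imp (big_or L) G).
Proof.
  induction L as [|a L IH]; simpl; intro H; [apply ax_taut; taut|].
  apply taut_mp2 with (Imp a G) (Imp (big_or L) G); [taut|apply H|apply IH]; auto.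
Qed.

Lemma big_or_app_l L1 L2 : prv (Imp (big_or L1) (big_or (L1 ++ L2))).
Proof. apply big_or_elim; intros; apply big_or_in, in_or_app; auto. Qed.

Lemma big_or_app_r L1 L2 : prv (Imp (big_or L2) (big_or (L1 ++ L2))).
Proof. apply big_or_elim; intros; apply big_or_in, in_or_app; auto. Qed.

Definition derives (G : formula -> Prop) (A : formula) : Prop :=
  exists L, (forall x, In x L -> G x) /\ prv (Imp (big_and L) A).

Definition consistent (G : formula -> Prop) : Prop := ~ derives G Bot.

Definition mcs (M : formula -> Prop) : Prop := consistent M /\ forall A, M A \/ M (Neg A).

Lemma derives_mono (G G' : formula -> Prop) A :
  (forall x, G x -> G' x) -> derives G A -> derives G' A.
Proof. intros H [L [HL Hp]]. exists L; auto. Qed.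

Lemma consistent_antimono (G G' : formula -> Prop) :
  (forall x, G x -> G' x) -> consistent G' -> consistent G.
Proof. intros H C D. exact (C (derives_mono _ _ _ H D)). Qed.

Lemma derives_mp G A B : derives G (Imp A B) -> derives G A -> derives G B.
Proof.
  intros [L1 [H1 P1]] [L2 [H2 P2]]. exists (L1 ++ L2). split.
  - intros x Hx. destruct (in_app_or _ _ _ Hx); auto.
  - apply taut_mp3 with (Imp (big_and (L1 ++ L2)) (And (big_and L1) (big_and L2)))
      (Imp (big_and L1) (Imp A B)) (Imp (big_and L2) A); [taut|apply big_and_app|exact P1|exact P2].
Qed.

Lemma derives_split (G P : formula -> Prop) L C :
  (forall x, In x L -> G x \/ P x) -> prv (Imp (big_and L) C) ->
  exists LG LP, (forall x, In x LG -> G x) /\ (forall x, In x LP -> P x) /\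
    prv (Imp (big_and LG) (Imp (big_and LP) C)).
Proof.
  revert C; induction L as [|a L IH]; intros C HL Hp; simpl in *.
  - exists [], []. split; [simpl; tauto|split; [simpl; tauto|]].
    apply taut_mp1 with (Imp Top C); [taut|exact Hp].
  - destruct (IH (Imp a C)) as [LG [LP [H1 [H2 H3]]]]; auto.
    { apply taut_mp1 with (Imp (And a (big_and L)) C); [taut|exact Hp]. }
    destruct (HL a (or_introl eq_refl)) as [Ha|Ha]; [exists (a :: LG), LP|exists LG, (a :: LP)];
      (split; [|split]); simpl; try (intros x [<-|]); auto;
      apply taut_mp1 with (Imp (big_and LG) (Imp (big_and LP) (Imp a C))); (taut || exact H3).
Qed.

Lemma derives_deduction G A C : derives (fun B => G B \/ B = A) C -> derives G (Imp A C).
Proof.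
  intros [L [HL Hp]].
  destruct (derives_split G (fun B => B = A) L C HL Hp) as [LG [LA [H1 [H2 H3]]]].
  exists LG. split; [exact H1|].
  apply taut_mp2 with (Imp (big_and LG) (Imp (big_and LA) C)) (Imp A (big_and LA)); [taut|exact H3|].
  apply big_and_intro. intros x Hx. rewrite (H2 x Hx). apply ax_taut; taut.
Qed.

Lemma consistent_neg A : ~ prv A -> consistent (fun B => B = Neg A).
Proof.
  intros HnA [L [HL Hp]]. apply HnA.
  apply taut_mp2 with (Imp (big_and L) Bot) (Imp (Neg A) (big_and L)); [taut|exact Hp|].
  apply big_and_intro. intros B HB. rewrite (HL B HB). apply ax_taut; taut.
Qed.

Section Mcs.

Variable M : formula -> Prop.
Hypothesis HM : mcs M.

Lemma mcs_closed A : derives M A -> M A.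
Proof.
  intros [L [HL Hp]]. destruct (proj2 HM A) as [|HN]; [assumption|].
  exfalso; apply (proj1 HM). exists (Neg A :: L). split.
  - intros x [<-|]; auto.
  - simpl. apply taut_mp1 with (Imp (big_and L) A); [taut|exact Hp].
Qed.

Lemma mcs_prv A : prv A -> M A.
Proof.
  intro H. apply mcs_closed. exists []. split; [simpl; tauto|].
  apply taut_mp1 with A; [taut|exact H].
Qed.

Lemma mcs_mp A B : M (Imp A B) -> M A -> M B.
Proof.
  intros H1 H2. apply mcs_closed. exists [Imp A B; A]. split.
  - intros x [<-|[<-|[]]]; auto.
  - apply ax_taut; taut.
Qed.

Lemma mcs_prv_mp A B : prv (Imp A B) -> M A -> M B.
Proof. intro H. apply mcs_mp, mcs_prv, H. Qed.

Lemma mcs_taut1 A B : tautology (Imp A B) -> M A -> M B.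
Proof. intro H. apply mcs_prv_mp, ax_taut, H. Qed.

Lemma mcs_taut2 A B C : tautology (Imp A (Imp B C)) -> M A -> M B -> M C.
Proof. intros H H1. apply mcs_mp. exact (mcs_taut1 _ _ H H1). Qed.

Lemma mcs_bot : ~ M Bot.
Proof.
  intro H; apply (proj1 HM). exists [Bot].
  split; [intros x [<-|[]]; exact H|apply ax_taut; taut].
Qed.

Lemma mcs_not A : M (Neg A) -> ~ M A.
Proof. intros H1 H2. exact (mcs_bot (mcs_mp _ _ H1 H2)). Qed.

Lemma mcs_top : M Top.
Proof. apply mcs_prv, ax_taut; taut. Qed.

Lemma mcs_imp A B : M (Imp A B) <-> (M A -> M B).
Proof.
  split; [apply mcs_mp|]. intro H. destruct (proj2 HM A) as [HA|HA].
  - apply (mcs_taut1 B); [taut|auto].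
  - apply (mcs_taut1 (Neg A)); [taut|auto].
Qed.

Lemma mcs_and A B : M (And A B) <-> M A /\ M B.
Proof.
  split.
  - intro H. split; apply (mcs_taut1 (And A B)); auto; taut.
  - intros [H1 H2]. apply (mcs_taut2 A B); auto; taut.
Qed.

Lemma mcs_or A B : M (Or A B) <-> M A \/ M B.
Proof.
  split.
  - intro H. destruct (proj2 HM A) as [HA|HA]; [auto|].
    right. apply (mcs_taut2 (Or A B) (Neg A)); auto; taut.
  - intros [H|H]; [apply (mcs_taut1 A)|apply (mcs_taut1 B)]; auto; taut.
Qed.

End Mcs.

Fixpoint encode (A : formula) : nat :=
  match A with
  | Var n => to_nat (0, n)
  | Top => to_nat (1, 0)
  | Bot => to_nat (2, 0)
  | Imp A B => to_nat (3, to_nat (encode A, encode B))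
  | Or A B => to_nat (4, to_nat (encode A, encode B))
  | And A B => to_nat (5, to_nat (encode A, encode B))
  | Box A => to_nat (6, encode A)
  | Rhd A B => to_nat (7, to_nat (encode A, encode B))
  end.

Lemma to_nat_pair_inj a b c d : to_nat (a, b) = to_nat (c, d) -> a = c /\ b = d.
Proof. intro H. apply to_nat_inj in H. injection H; auto. Qed.

Lemma encode_inj A B : encode A = encode B -> A = B.
Proof.
  revert B; induction A; destruct B; cbn [encode]; intro H; apply to_nat_pair_inj in H;
    destruct H as [H1 H2]; try discriminate;
    try (apply to_nat_pair_inj in H2; destruct H2); f_equal; auto.
Qed.

Fixpoint stage (G : formula -> Prop) (n : nat) : formula -> Prop :=
  match n with
  | 0 => G
  | Datatypes.S n => fun A =>
      stage G n A \/ (encode A = n /\ consistent (fun B => stage G n B \/ B = A))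
  end.

Definition lindenbaum_ext (G : formula -> Prop) (A : formula) : Prop := exists n, stage G n A.

Lemma stage_mono G m n A : m <= n -> stage G m A -> stage G n A.
Proof. induction 1; simpl; auto. Qed.

Lemma stage_consistent G n : consistent G -> consistent (stage G n).
Proof.
  intro HG; induction n; simpl; [exact HG|].
  destruct (classic (exists A, encode A = n /\ consistent (fun B => stage G n B \/ B = A)))
    as [[A [HA Hc]]|Hn].
  - apply consistent_antimono with (fun B => stage G n B \/ B = A); [|exact Hc].
    intros x [Hx|[Hx _]]; auto. right; apply encode_inj; congruence.
  - apply consistent_antimono with (stage G n); [|exact IHn].
    intros x [Hx|[Hx Hc]]; [exact Hx|]. exfalso; eauto.
Qed.

Lemma lindenbaum_ext_consistent G : consistent G -> consistent (lindenbaum_ext G).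
Proof.
  intros HG [L [HL Hp]].
  assert (HN : exists N, forall x, In x L -> stage G N x).
  { clear Hp; induction L as [|a L IH]; [exists 0; simpl; tauto|].
    destruct IH as [N HN]; [intros; apply HL; simpl; auto|].
    destruct (HL a (or_introl eq_refl)) as [m Hm].
    exists (max N m). intros x [<-|Hx]; [apply stage_mono with m|apply stage_mono with N];
      auto; lia. }
  destruct HN as [N HN]. apply (stage_consistent G N HG). exists L; auto.
Qed.

Lemma lindenbaum_ext_maximal G : consistent G ->
  forall A, lindenbaum_ext G A \/ lindenbaum_ext G (Neg A).
Proof.
  intros HG A.
  destruct (classic (consistent (fun B => stage G (encode A) B \/ B = A))) as [Hc|Hn];
    [left; exists (Datatypes.S (encode A)); simpl; auto|].
  destruct (classic (consistent (fun B => stage G (encode (Neg A)) B \/ B = Neg A)))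
    as [Hc'|Hn']; [right; exists (Datatypes.S (encode (Neg A))); simpl; auto|].
  exfalso. apply NNPP, derives_deduction in Hn, Hn'.
  apply (lindenbaum_ext_consistent G HG). apply derives_mp with (Neg A).
  - eapply derives_mono; [|exact Hn']. intros x Hx; exists (encode (Neg A)); exact Hx.
  - eapply derives_mono; [|exact Hn]. intros x Hx; exists (encode A); exact Hx.
Qed.

Lemma lindenbaum G : consistent G -> exists M, mcs M /\ forall A, G A -> M A.
Proof.
  intro HG. exists (lindenbaum_ext G).
  split; [split; [apply lindenbaum_ext_consistent|apply lindenbaum_ext_maximal]; exact HG|].
  intros A HA; exists 0; exact HA.
Qed.

(** * Interpretability inside maximal consistent sets *)

Lemma prv_box_4 A : prv (Imp (Box A) (Box (Box A))).
Proof.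
  set (G := And A (Box A)).
  assert (HGA : prv (Imp (Box G) (Box A))) by (apply prv_box_mono, ax_taut; taut).
  assert (HG : prv (Imp (Box A) (Box (Imp (Box G) G)))).
  { apply prv_box_mono. apply taut_mp1 with (Imp (Box G) (Box A)); [unfold G; taut|exact HGA]. }
  assert (HGB : prv (Imp (Box G) (Box (Box A)))) by (apply prv_box_mono, ax_taut; unfold G; taut).
  apply taut_mp3 with (Imp (Box A) (Box (Imp (Box G) G))) (Imp (Box (Imp (Box G) G)) (Box G))
    (Imp (Box G) (Box (Box A))); [taut|exact HG|apply ax_L|exact HGB].
Qed.

Lemma prv_lob_least B : prv (Imp B (Or (And B (Box (Neg B))) (Dia (And B (Box (Neg B)))))).
Proof.
  set (G := And B (Box (Neg B))).
  assert (H : prv (Imp (Box (Neg G)) (Box (Imp (Box (Neg B)) (Neg B)))))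
    by (apply prv_box_mono, ax_taut; unfold G; taut).
  apply taut_mp2 with (Imp (Box (Neg G)) (Box (Imp (Box (Neg B)) (Neg B))))
    (Imp (Box (Imp (Box (Neg B)) (Neg B))) (Box (Neg B))); [unfold G; taut|exact H|apply ax_L].
Qed.

Lemma directed_big_and (P Good : formula -> Prop) :
  (exists g, Good g) ->
  (forall a g, P a -> Good g -> exists g', Good g' /\ prv (Imp g' (And a g))) ->
  forall L, (forall x, In x L -> P x) -> exists g, Good g /\ prv (Imp g (big_and L)).
Proof.
  intros [g0 Hg0] Hstep. induction L as [|a L IH]; intro HL.
  - exists g0. split; [exact Hg0|apply ax_taut; taut].
  - destruct IH as [g [Hg Hgc]]; [intros; apply HL; simpl; auto|].
    destruct (Hstep a g (HL a (or_introl eq_refl)) Hg) as [g' [Hg' Hg'a]].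
    exists g'. split; [exact Hg'|]. simpl.
    apply taut_mp2 with (Imp g' (And a g)) (Imp g (big_and L)); [taut|exact Hg'a|exact Hgc].
Qed.

Definition gl_succ (X Y : formula -> Prop) : Prop := forall D, X (Box D) -> Y D /\ Y (Box D).

(* The successor refuting B ▷ C must contain [witness_form B C D] for every D ▷ C at hand;
   the one realising B ▷ C must contain [target_form C E D] for every disjunction E of
   obligations and every D ▷ E. *)
Definition witness_form B C D : formula :=
  And (And B (Box (Neg B))) (And (Box (Neg C)) (And (Neg D) (Box (Neg D)))).

Definition target_form C E D : formula :=
  And (And C (Box (Neg C))) (And (Neg E) (And (Box (Neg E)) (And (Neg D) (Box (Neg D))))).

Lemma prv_neg_or A B :
  prv (Imp (And (Neg (Or A B)) (Box (Neg (Or A B))))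
         (And (And (Neg A) (Box (Neg A))) (And (Neg B) (Box (Neg B))))).
Proof.
  apply taut_mp1 with (Imp (Box (Neg (Or A B))) (And (Box (Neg A)) (Box (Neg B))));
    [taut|apply prv_box_neg_or].
Qed.

Lemma prv_neg_or_case N a g g' :
  a = Neg N \/ a = Box (Neg N) ->
  prv (Imp g' (And (And (Neg N) (Box (Neg N))) g)) -> prv (Imp g' (And a g)).
Proof.
  intros [-> | ->] H; (apply taut_mp1 with (Imp g' (And (And (Neg N) (Box (Neg N))) g));
    [taut|exact H]).
Qed.

Lemma witness_form_or B C D' D :
  prv (Imp (witness_form B C (Or D' D)) (And (And (Neg D') (Box (Neg D'))) (witness_form B C D))).
Proof.
  apply taut_mp1 with (Imp (And (Neg (Or D' D)) (Box (Neg (Or D' D))))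
    (And (And (Neg D') (Box (Neg D'))) (And (Neg D) (Box (Neg D)))));
    [unfold witness_form; taut|apply prv_neg_or].
Qed.

Lemma target_form_or C E D' D :
  prv (Imp (target_form C E (Or D' D)) (And (And (Neg D') (Box (Neg D'))) (target_form C E D))).
Proof.
  apply taut_mp1 with (Imp (And (Neg (Or D' D)) (Box (Neg (Or D' D))))
    (And (And (Neg D') (Box (Neg D'))) (And (Neg D) (Box (Neg D)))));
    [unfold target_form; taut|apply prv_neg_or].
Qed.

Lemma target_form_or_target C c E D :
  prv (Imp (target_form C (Or c E) D) (And (And (Neg c) (Box (Neg c))) (target_form C E D))).
Proof.
  apply taut_mp1 with (Imp (And (Neg (Or c E)) (Box (Neg (Or c E))))
    (And (And (Neg c) (Box (Neg c))) (And (Neg E) (Box (Neg E)))));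
    [unfold target_form; taut|apply prv_neg_or].
Qed.

Lemma target_form_mono C E E' D :
  prv (Imp E E') -> prv (Imp (target_form C E' D) (target_form C E D)).
Proof.
  intro H. apply taut_mp2 with (Imp E E') (Imp (Box (Neg E')) (Box (Neg E)));
    [unfold target_form; taut|exact H|].
  apply prv_box_mono. apply taut_mp1 with (Imp E E'); [taut|exact H].
Qed.

Section MaximalConsistent.

Variable X : formula -> Prop.
Hypothesis HX : mcs X.

Lemma mcs_box_big_and L : (forall x, In x L -> X (Box x)) -> X (Box (big_and L)).
Proof.
  induction L as [|a L IH]; simpl; intro H.
  - apply (mcs_prv _ HX), r_nec, ax_taut; taut.
  - apply (mcs_mp _ HX) with (Box (big_and L)); [|apply IH; auto].
    apply (mcs_mp _ HX) with (Box (Imp (big_and L) (And a (big_and L)))); [apply (mcs_prv _ HX), ax_K|].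
    apply (mcs_prv_mp _ HX) with (Box a); [apply prv_box_mono, ax_taut; taut|auto].
Qed.

(* [Good] is a directed family of formulas, each possible at [X], bounding the finite
   parts of [P]. *)
Lemma mcs_successor (P Good : formula -> Prop) :
  (exists g, Good g) ->
  (forall a g, P a -> Good g -> exists g', Good g' /\ prv (Imp g' (And a g))) ->
  (forall g, Good g -> ~ X (Box (Neg g))) ->
  exists Y, mcs Y /\ gl_succ X Y /\ (forall a, P a -> Y a).
Proof.
  intros Hg0 Hstep Hpos.
  set (boxed := fun A => exists D, X (Box D) /\ (A = D \/ A = Box D)).
  destruct (lindenbaum (fun A => boxed A \/ P A)) as [Y [HY HGY]].
  - intros [L [HL Hp]].
    destruct (derives_split _ _ L Bot HL Hp) as [LB [LP [HLB [HLP Hsplit]]]].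
    destruct (directed_big_and P Good Hg0 Hstep LP HLP) as [g [Hg Hgc]].
    apply (Hpos g Hg). apply (mcs_prv_mp _ HX) with (Box (big_and LB)).
    + apply prv_box_mono.
      apply taut_mp2 with (Imp (big_and LB) (Imp (big_and LP) Bot)) (Imp g (big_and LP));
        [taut|exact Hsplit|exact Hgc].
    + apply mcs_box_big_and. intros x Hx. destruct (HLB x Hx) as [E [HE [->| ->]]]; [exact HE|].
      exact (mcs_prv_mp _ HX _ _ (prv_box_4 E) HE).
  - exists Y. split; [exact HY|split].
    + intros D HD. split; apply HGY; left; exists D; auto.
    + intros a Ha. apply HGY; right; exact Ha.
Qed.

Lemma mcs_R1 A B C : prv (Imp A B) -> X (Rhd C A) -> X (Rhd C B).
Proof. intro H. apply (mcs_prv_mp _ HX), r_R1, H. Qed.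

Lemma mcs_R2 A B C : prv (Imp A B) -> X (Rhd B C) -> X (Rhd A C).
Proof. intro H. apply (mcs_prv_mp _ HX), r_R2, H. Qed.

Lemma mcs_J3 A B C : X (Rhd A C) -> X (Rhd B C) -> X (Rhd (Or A B) C).
Proof.
  intros H1 H2. apply (mcs_mp _ HX) with (And (Rhd A C) (Rhd B C));
    [apply (mcs_prv _ HX), ax_J3|apply (mcs_and _ HX); auto].
Qed.

Lemma mcs_J2p A B C : X (Rhd A (Or B C)) -> X (Rhd B C) -> X (Rhd A C).
Proof.
  intros H1 H2. apply (mcs_mp _ HX) with (And (Rhd A (Or B C)) (Rhd B C));
    [apply (mcs_prv _ HX), ax_J2p|apply (mcs_and _ HX); auto].
Qed.

Lemma mcs_J5 A : X (Rhd (Dia A) A).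
Proof. apply (mcs_prv _ HX), ax_J5. Qed.

Lemma mcs_J5_dia A C : X (Rhd A C) -> X (Rhd (Dia A) C).
Proof.
  intro H. apply mcs_J2p with A; [|exact H].
  apply mcs_R1 with A; [apply ax_taut; taut|apply mcs_J5].
Qed.

Lemma mcs_J6 A : X (Box (Neg A)) <-> X (Rhd A Bot).
Proof.
  pose proof (mcs_prv _ HX _ (ax_J6 A)) as H. apply (mcs_and _ HX) in H.
  split; apply (mcs_mp _ HX); apply H.
Qed.

Lemma mcs_rhd_of_box_neg A C : X (Box (Neg A)) -> X (Rhd A C).
Proof. intro H. apply mcs_R1 with Bot; [apply ax_taut; taut|apply mcs_J6, H]. Qed.

Lemma mcs_rhd_least A C : X (Rhd A C) -> X (Rhd A (And C (Box (Neg C)))).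
Proof.
  intro H. apply mcs_J2p with (Dia (And C (Box (Neg C)))); [|apply mcs_J5].
  apply mcs_R1 with C; [|exact H].
  apply taut_mp1 with (Imp C (Or (And C (Box (Neg C))) (Dia (And C (Box (Neg C))))));
    [taut|apply prv_lob_least].
Qed.

Lemma mcs_rhd_box_imp A G F : X (Rhd A G) -> X (Box (Imp G F)) -> X (Rhd A F).
Proof.
  intros H1 H2. apply mcs_J2p with (And G (Neg F)).
  - apply mcs_R1 with G; [apply ax_taut; taut|exact H1].
  - apply mcs_rhd_of_box_neg. apply (mcs_prv_mp _ HX) with (Box (Imp G F)); [|exact H2].
    apply prv_box_mono, ax_taut; taut.
Qed.

Lemma mcs_rhd_of_no_witness B C D :
  X (Box (Neg (witness_form B C D))) -> X (Rhd D C) -> X (Rhd B C).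
Proof.
  intros H HD.
  set (G0 := And B (Box (Neg B))). set (H0 := And G0 (Box (Neg C))). set (F := Or D (Dia D)).
  assert (HF : X (Rhd F C)) by (apply mcs_J3; [exact HD|apply mcs_J5_dia, HD]).
  assert (HH0 : X (Rhd H0 C)).
  { apply mcs_R2 with (Or (And H0 F) (And H0 (Neg F))); [apply ax_taut; taut|].
    apply mcs_J3; [apply mcs_R2 with F; [apply ax_taut; taut|exact HF]|].
    apply mcs_rhd_of_box_neg. apply (mcs_prv_mp _ HX) with (Box (Neg (witness_form B C D)));
      [apply prv_box_mono, ax_taut; unfold H0, G0, F, witness_form; taut|exact H]. }
  assert (HG0 : X (Rhd G0 C)).
  { apply mcs_R2 with (Or H0 (And G0 (Dia C))); [apply ax_taut; unfold H0; taut|].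
    apply mcs_J3; [exact HH0|]. apply mcs_R2 with (Dia C); [apply ax_taut; taut|apply mcs_J5]. }
  apply mcs_R2 with (Or G0 (Dia G0)); [apply prv_lob_least|].
  apply mcs_J3; [exact HG0|apply mcs_J5_dia, HG0].
Qed.

Lemma mcs_rhd_of_no_target B C E D :
  X (Rhd B C) -> X (Rhd D E) -> X (Box (Neg (target_form C E D))) -> X (Rhd B E).
Proof.
  intros HBC HDE H.
  set (G := And C (Box (Neg C))). set (F := Or (Dia E) (Or D (Dia D))).
  apply mcs_J2p with F.
  - apply mcs_rhd_box_imp with G; [apply mcs_rhd_least, HBC|].
    apply (mcs_prv_mp _ HX) with (Box (Neg (target_form C E D))); [|exact H].
    apply prv_box_mono, ax_taut; unfold G, F, target_form; taut.
  - apply mcs_J3; [apply mcs_J5|apply mcs_J3; [exact HDE|apply mcs_J5_dia, HDE]].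
Qed.

Lemma mcs_box_counter B :
  ~ X (Box B) -> exists Y, mcs Y /\ gl_succ X Y /\ ~ Y B /\ Y (Box B).
Proof.
  intro HnB.
  destruct (mcs_successor (fun a => a = Neg B \/ a = Box B) (fun g => g = And (Neg B) (Box B)))
    as [Y [HY [HXY HYP]]].
  - eauto.
  - intros a g Ha ->. exists (And (Neg B) (Box B)).
    split; [reflexivity|destruct Ha as [-> | ->]; apply ax_taut; taut].
  - intros g -> Hg. apply HnB.
    apply (mcs_mp _ HX) with (Box (Imp (Box B) B)); [apply (mcs_prv _ HX), ax_L|].
    apply (mcs_prv_mp _ HX) with (Box (Neg (And (Neg B) (Box B)))); [|exact Hg].
    apply prv_box_mono, ax_taut; taut.
  - exists Y. split; [exact HY|split; [exact HXY|split]].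
    + apply (mcs_not _ HY), HYP. left; reflexivity.
    + apply HYP. right; reflexivity.
Qed.

Lemma mcs_rhd_counter B C :
  ~ X (Rhd B C) ->
  exists Y, mcs Y /\ gl_succ X Y /\ Y B /\ Y (Box (Neg B)) /\ Y (Box (Neg C)) /\
    forall D, X (Rhd D C) -> Y (Neg D) /\ Y (Box (Neg D)).
Proof.
  intro HnBC.
  destruct (mcs_successor
    (fun a => a = B \/ a = Box (Neg B) \/ a = Box (Neg C) \/
       exists D, X (Rhd D C) /\ (a = Neg D \/ a = Box (Neg D)))
    (fun g => exists D, X (Rhd D C) /\ g = witness_form B C D))
    as [Y [HY [HXY HYP]]].
  - exists (witness_form B C Bot), Bot. split; [|reflexivity].
    apply mcs_rhd_of_box_neg, (mcs_prv _ HX), r_nec, ax_taut; taut.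
  - intros a g Ha [D [HD ->]]. destruct Ha as [Ha|[Ha|[Ha|[D' [HD' Ha]]]]].
    1-3: exists (witness_form B C D); split; [exists D; auto|];
      subst; apply ax_taut; unfold witness_form; taut.
    exists (witness_form B C (Or D' D)). split; [exists (Or D' D); split; [apply mcs_J3|]; auto|].
    apply prv_neg_or_case with D'; [exact Ha|apply witness_form_or].
  - intros g [D [HD ->]] Hg. exact (HnBC (mcs_rhd_of_no_witness B C D Hg HD)).
  - exists Y. refine (conj HY (conj HXY (conj _ (conj _ (conj _ _))))); [apply HYP; auto..|].
    intros D HD. split; apply HYP; right; right; right; exists D; auto.
Qed.

Lemma mcs_rhd_target (ob : formula -> Prop) B C :
  X (Rhd B C) -> (forall Cs, (forall c, In c Cs -> ob c) -> ~ X (Rhd B (big_or Cs))) ->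
  exists Z, mcs Z /\ gl_succ X Z /\ Z C /\ Z (Box (Neg C)) /\
    (forall c, ob c -> Z (Neg c) /\ Z (Box (Neg c))) /\
    forall Cs D, (forall c, In c Cs -> ob c) -> X (Rhd D (big_or Cs)) ->
      Z (Neg D) /\ Z (Box (Neg D)).
Proof.
  intros HBC Hob.
  destruct (mcs_successor
    (fun a => a = C \/ a = Box (Neg C) \/ (exists c, ob c /\ (a = Neg c \/ a = Box (Neg c))) \/
       exists Cs D, (forall c, In c Cs -> ob c) /\ X (Rhd D (big_or Cs)) /\
         (a = Neg D \/ a = Box (Neg D)))
    (fun g => exists Cs D, (forall c, In c Cs -> ob c) /\ X (Rhd D (big_or Cs)) /\
       g = target_form C (big_or Cs) D))
    as [Z [HZ [HXZ HZP]]].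
  - exists (target_form C Bot Bot), [], Bot. split; [intros c []|split; [|reflexivity]].
    apply mcs_rhd_of_box_neg, (mcs_prv _ HX), r_nec, ax_taut; taut.
  - intros a g Ha [Cs [D [HCs [HD ->]]]].
    destruct Ha as [Ha|[Ha|[[c [Hc Ha]]|[Cs' [D' [HCs' [HD' Ha]]]]]]].
    1-2: exists (target_form C (big_or Cs) D); split; [exists Cs, D; auto|];
      subst; apply ax_taut; unfold target_form; taut.
    + exists (target_form C (Or c (big_or Cs)) D). split.
      * exists (c :: Cs), D. split; [intros c' [<-|]; auto|split; [|reflexivity]].
        apply mcs_R1 with (big_or Cs); [apply ax_taut; taut|exact HD].
      * apply prv_neg_or_case with c; [exact Ha|apply target_form_or_target].
    + exists (target_form C (big_or (Cs' ++ Cs)) (Or D' D)). split.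
      * exists (Cs' ++ Cs), (Or D' D).
        split; [intros c' Hc'; destruct (in_app_or _ _ _ Hc'); auto|split; [|reflexivity]].
        apply mcs_J3; [apply mcs_R1 with (big_or Cs'); [apply big_or_app_l|exact HD']|].
        apply mcs_R1 with (big_or Cs); [apply big_or_app_r|exact HD].
      * apply prv_neg_or_case with D'; [exact Ha|].
        apply taut_mp2 with (Imp (target_form C (big_or (Cs' ++ Cs)) (Or D' D))
            (And (And (Neg D') (Box (Neg D'))) (target_form C (big_or (Cs' ++ Cs)) D)))
          (Imp (target_form C (big_or (Cs' ++ Cs)) D) (target_form C (big_or Cs) D));
          [taut|apply target_form_or|apply target_form_mono, big_or_app_r].
  - intros g [Cs [D [HCs [HD ->]]]] Hg.
    exact (Hob Cs HCs (mcs_rhd_of_no_target B C (big_or Cs) D HBC HD Hg)).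
  - exists Z. refine (conj HZ (conj HXZ (conj _ (conj _ (conj _ _))))); [apply HZP; auto..| |].
    + intros c Hc. split; apply HZP; right; right; left; exists c; auto.
    + intros Cs D HCs HD. split; apply HZP; right; right; right; exists Cs, D; auto.
Qed.

End MaximalConsistent.

(** * The canonical model *)

(* A world is a path of maximal consistent sets, newest first, together with obligations
   [(p, C)]: [C] must fail in every world S-reachable from it whose path properly extends
   [p].  The tags keep freshly created paths apart from the recorded ones. *)
Definition entry : Type := ((formula -> Prop) * nat)%type.

Record node : Type := mk_node { path : list entry; obls : list (list entry * formula) }.

Definition tip (p : list entry) : formula -> Prop :=
  match p with e :: _ => fst e | [] => fun _ => False end.

Definition strict_succ (Fb : list formula) (X Y : formula -> Prop) : Prop :=
  gl_succ X Y /\ exists D, In D Fb /\ Y (Box D) /\ ~ X (Box D).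

Fixpoint succ_chain (Fb : list formula) (p : list entry) : Prop :=
  match p with
  | [] => True
  | e :: q => (forall f, In f q -> strict_succ Fb (fst f) (fst e)) /\ succ_chain Fb q
  end.

Definition extends (q p : list entry) : Prop := exists r, q = r ++ p.

Definition pextends (q p : list entry) : Prop := exists r e, q = r ++ e :: p.

Definition coherent (P : list entry) (O : list (list entry * formula)) : Prop :=
  (forall p C r e, In (p, C) O -> P = r ++ e :: p -> fst e (Box (Neg C))) /\
  (forall p r e Cs D, P = r ++ e :: p -> (forall c, In c Cs -> In (p, c) O) ->
     tip p (Rhd D (big_or Cs)) -> fst e (Neg D) /\ fst e (Box (Neg D))).

Definition respects (O : list (list entry * formula)) (P : list entry) : Prop :=
  forall p C, In (p, C) O -> pextends P p -> ~ tip P C.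

Record good_node (Fb : list formula) (v : node) : Prop := {
  good_mcs : mcs (tip (path v));
  good_chain : succ_chain Fb (path v);
  good_fresh : forall p C, In (p, C) (obls v) -> ~ extends p (path v);
  good_coherent : coherent (path v) (obls v) }.

Definition node_S (u v : node) : Prop := incl (obls u) (obls v) /\ respects (obls u) (path v).

Definition node_R (u v : node) : Prop := pextends (path v) (path u) /\ node_S u v.

Definition tag (O : list (list entry * formula)) : nat :=
  Datatypes.S (list_max (map snd (flat_map fst O))).

Lemma filter_length_mono {T} (f g : T -> bool) l :
  (forall x, In x l -> f x = true -> g x = true) -> length (filter f l) <= length (filter g l).
Proof.
  induction l as [|a l IH]; simpl; intro Hfg; [reflexivity|].
  destruct (f a) eqn:Ha.
  - rewrite (Hfg a (or_introl eq_refl) Ha). simpl. apply le_n_S, IH; auto.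
  - destruct (g a); simpl; [apply le_S|]; apply IH; auto.
Qed.

Lemma filter_length_lt {T} (f g : T -> bool) l :
  (forall x, In x l -> f x = true -> g x = true) ->
  (exists x, In x l /\ g x = true /\ f x = false) ->
  length (filter f l) < length (filter g l).
Proof.
  induction l as [|a l IH]; simpl; intros Hfg [x [Hx [Hg Hf]]]; [destruct Hx|].
  destruct Hx as [<-|Hx].
  - rewrite Hg, Hf. simpl. apply le_n_S, filter_length_mono; auto.
  - destruct (f a) eqn:Ha.
    + rewrite (Hfg a (or_introl eq_refl) Ha). simpl. apply le_n_S, IH; eauto.
    + destruct (g a); simpl; [apply le_S|]; apply IH; eauto.
Qed.

Section Chains.

Variable Fb : list formula.

Lemma strict_succ_trans X Y Z : strict_succ Fb X Y -> strict_succ Fb Y Z -> strict_succ Fb X Z.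
Proof.
  intros [HXY _] [HYZ [D [HD [HZ HY]]]]. split.
  - intros E HE. apply HYZ, HXY, HE.
  - exists D. split; [exact HD|split; [exact HZ|]]. intro HXD. exact (HY (proj2 (HXY D HXD))).
Qed.

Lemma succ_chain_cons P Y t :
  succ_chain Fb P -> strict_succ Fb (tip P) Y -> succ_chain Fb ((Y, t) :: P).
Proof.
  intros HP HY. split; [|exact HP]. destruct P as [|e q]; [intros _ []|].
  intros f [<-|Hf]; [exact HY|]. exact (strict_succ_trans _ _ _ (proj1 HP f Hf) HY).
Qed.

Lemma succ_chain_tip r e p :
  succ_chain Fb (r ++ e :: p) -> r = [] \/ strict_succ Fb (fst e) (tip (r ++ e :: p)).
Proof.
  intro HC. destruct r as [|f r]; [left; reflexivity|right].
  apply (proj1 HC), in_or_app. right; left; reflexivity.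
Qed.

Lemma succ_chain_box r e p D :
  succ_chain Fb (r ++ e :: p) -> fst e (Box D) -> tip (r ++ e :: p) (Box D).
Proof.
  intros HC HD. destruct (succ_chain_tip r e p HC) as [->|[Hs _]]; [exact HD|apply Hs, HD].
Qed.

Lemma succ_chain_persist r e p A :
  succ_chain Fb (r ++ e :: p) -> fst e A -> fst e (Box A) -> tip (r ++ e :: p) A.
Proof.
  intros HC HA HB. destruct (succ_chain_tip r e p HC) as [->|[Hs _]]; [exact HA|apply Hs, HB].
Qed.

Definition rank (X : formula -> Prop) : nat := length (filter (fun D => decide (X (Box D))) Fb).

Lemma rank_lt X Y : strict_succ Fb X Y -> rank X < rank Y.
Proof.
  intros [HXY [D [HD [HY HX]]]]. apply filter_length_lt.
  - intros E _ HE. apply decide_true, HXY, decide_true, HE.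
  - exists D. split; [exact HD|split; [apply decide_true, HY|apply decide_false, HX]].
Qed.

Lemma rank_le X : rank X <= length Fb.
Proof. apply filter_length_le. Qed.

End Chains.

Lemma coherent_suffix r P O : coherent (r ++ P) O -> coherent P O.
Proof.
  intros [H1 H2]. split.
  - intros p C r' e HpC HP. apply (H1 p C (r ++ r') e HpC). rewrite HP, app_assoc; reflexivity.
  - intros p r' e Cs D HP. apply (H2 p (r ++ r') e). rewrite HP, app_assoc; reflexivity.
Qed.

Lemma coherent_cons P O Y t :
  coherent P O ->
  (forall C, In (P, C) O -> Y (Box (Neg C))) ->
  (forall Cs D, (forall c, In c Cs -> In (P, c) O) -> tip P (Rhd D (big_or Cs)) ->
     Y (Neg D) /\ Y (Box (Neg D))) ->
  coherent ((Y, t) :: P) O.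
Proof.
  intros [H1 H2] HY1 HY2. split.
  - intros p C r e HpC Hp. destruct r as [|f r]; injection Hp as Hf HP; subst.
    + apply HY1, HpC.
    + exact (H1 p C r e HpC eq_refl).
  - intros p r e Cs D Hp. destruct r as [|f r]; injection Hp as Hf HP; subst.
    + apply HY2.
    + exact (H2 p r e Cs D eq_refl).
Qed.

Lemma coherent_add_own P O C : coherent P O -> coherent P (O ++ [(P, C)]).
Proof.
  assert (Hne : forall r e p, P = r ++ e :: p -> p <> P).
  { intros r e p HP <-. apply (f_equal (@length entry)) in HP.
    rewrite length_app in HP; simpl in HP; lia. }
  intros [H1 H2]. split.
  - intros p C' r e HpC HP. apply (H1 p C' r e); [|exact HP].
    destruct (in_app_or _ _ _ HpC) as [H|[H|[]]]; [exact H|].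
    injection H as <- _. destruct (Hne r e P HP eq_refl).
  - intros p r e Cs D HP HCs. apply (H2 p r e Cs D HP). intros c Hc.
    destruct (in_app_or _ _ _ (HCs c Hc)) as [H|[H|[]]]; [exact H|].
    injection H as <- _. destruct (Hne r e P HP eq_refl).
Qed.

Lemma respects_cons Fb P O Y t :
  succ_chain Fb P -> strict_succ Fb (tip P) Y -> mcs Y -> coherent P O ->
  (forall C, In (P, C) O -> Y (Neg C)) -> respects O ((Y, t) :: P).
Proof.
  intros HP HY HYm [H1 _] HY1 p C HpC [r [e He]].
  destruct r as [|f r]; injection He as Hf HPe; subst; apply (mcs_not _ HYm).
  - apply HY1, HpC.
  - apply (proj1 HY). exact (succ_chain_box Fb r e p _ HP (H1 p C r e HpC eq_refl)).
Qed.

Lemma tag_fresh O p C Y P : In (p, C) O -> ~ extends p ((Y, tag O) :: P).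
Proof.
  intros HpC [r ->].
  assert (Hin : In (tag O) (map snd (flat_map fst O))).
  { apply in_map_iff. exists (Y, tag O). split; [reflexivity|].
    apply in_flat_map. exists (r ++ (Y, tag O) :: P, C). split; [exact HpC|].
    apply in_or_app; right; left; reflexivity. }
  pose proof (proj1 (list_max_le (map snd (flat_map fst O)) _) (le_n _)) as Hmax.
  rewrite Forall_forall in Hmax. specialize (Hmax _ Hin). unfold tag in Hmax. lia.
Qed.

Section Nodes.

Variable Fb : list formula.

Lemma child_good x Y O :
  good_node Fb x -> mcs Y -> strict_succ Fb (tip (path x)) Y ->
  coherent ((Y, tag O) :: path x) O -> good_node Fb (mk_node ((Y, tag O) :: path x) O).
Proof.
  intros Hx HY Hs Hc. constructor; simpl.
  - exact HY.
  - exact (succ_chain_cons Fb _ Y (tag O) (good_chain _ _ Hx) Hs).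
  - intros p C HpC. apply tag_fresh with C, HpC.
  - exact Hc.
Qed.

Lemma no_own_obligation x C : good_node Fb x -> ~ In (path x, C) (obls x).
Proof. intros Hx H. apply (good_fresh _ _ Hx _ _ H). exists []. reflexivity. Qed.

Lemma child_R x Y t O :
  good_node Fb x -> mcs Y -> strict_succ Fb (tip (path x)) Y -> incl (obls x) O ->
  node_R x (mk_node ((Y, t) :: path x) O).
Proof.
  intros Hx HY Hs Hi. split; [exists [], (Y, t); reflexivity|split; [exact Hi|]].
  simpl. apply respects_cons with Fb; auto; [apply Hx|apply Hx|].
  intros C H. destruct (no_own_obligation x C Hx H).
Qed.

Lemma node_R_strict_succ x y :
  good_node Fb x -> good_node Fb y -> node_R x y -> strict_succ Fb (tip (path x)) (tip (path y)).
Proof.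
  intros Hx Hy [[r [e Hxy]] _]. pose proof (good_chain _ _ Hy) as HC.
  pose proof (good_mcs _ _ Hx) as Hm. rewrite Hxy in HC |- *. revert Hm HC.
  (* the tip of an empty path is the empty set, which is not maximal *)
  destruct (path x) as [|a h]; intros Hm HC; [destruct (proj2 Hm Top) as [[]|[]]|].
  replace (r ++ e :: a :: h) with ((r ++ [e]) ++ a :: h) in HC |- *
    by (rewrite <- app_assoc; reflexivity).
  destruct (succ_chain_tip Fb _ a h HC) as [Hr|Hs]; [destruct r; discriminate|exact Hs].
Qed.

Lemma node_R_trans x y z : node_R x y -> node_R y z -> node_R x z.
Proof.
  intros [[r [e Hxy]] [Hi _]] [[r' [e' Hyz]] [Hi' Hres]]. split; [|split].
  - exists (r' ++ e' :: r), e. rewrite Hyz, Hxy, <- app_assoc. reflexivity.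
  - intros a Ha. auto.
  - intros p C HpC. apply Hres, Hi, HpC.
Qed.

Lemma node_S_trans x y z : node_S x y -> node_S y z -> node_S x z.
Proof.
  intros [Hi _] [Hi' Hres]. split; [intros a Ha; auto|]. intros p C HpC. apply Hres, Hi, HpC.
Qed.

Definition world : Type := {v : node | good_node Fb v}.

Lemma world_R_cwf : well_founded (fun y x : world => node_R (proj1_sig x) (proj1_sig y)).
Proof.
  apply Inclusion.wf_incl with
    (ltof _ (fun v : world => length Fb - rank Fb (tip (path (proj1_sig v))))).
  - intros [y Hy] [x Hx] H. unfold ltof; simpl in *.
    pose proof (rank_lt Fb _ _ (node_R_strict_succ x y Hx Hy H)).
    pose proof (rank_le Fb (tip (path y))). lia.
  - apply well_founded_ltof.
Qed.

Lemma root_good M0 : mcs M0 -> good_node Fb (mk_node [(M0, 0)] []).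
Proof.
  intro H0. constructor; simpl; [exact H0|split; [intros f []|exact I]|tauto|].
  split; [intros p C r e []|].
  intros p [|f r] e Cs D Hp _ HD; [injection Hp; intros; subst; destruct HD|].
  destruct r; discriminate.
Qed.

Definition canonical_frame (M0 : formula -> Prop) (H0 : mcs M0) : sframe := {|
  W := world;
  R := fun a b => node_R (proj1_sig a) (proj1_sig b);
  S := fun a b => node_S (proj1_sig a) (proj1_sig b);
  W_inhabited := inhabits (exist _ (mk_node [(M0, 0)] []) (root_good M0 H0));
  R_trans := fun a b c => node_R_trans (proj1_sig a) (proj1_sig b) (proj1_sig c);
  R_cwf := world_R_cwf;
  S_trans := fun a b c => node_S_trans (proj1_sig a) (proj1_sig b) (proj1_sig c);
  R_sub_S := fun a b H => proj2 H |}.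

End Nodes.

Section Witnesses.

Variable Fb : list formula.
Variable x : node.
Hypothesis Hx : good_node Fb x.

Lemma strict_succ_of_new_box X Y D :
  mcs Y -> gl_succ X Y -> In D Fb -> Y (Box D) -> ~ Y D -> strict_succ Fb X Y.
Proof.
  intros HY HXY HD HYD HnD. split; [exact HXY|]. exists D.
  split; [exact HD|split; [exact HYD|]]. intro H. exact (HnD (proj1 (HXY D H))).
Qed.

Lemma box_witness B :
  In B Fb -> ~ tip (path x) (Box B) ->
  exists y, good_node Fb y /\ node_R x y /\ ~ tip (path y) B.
Proof.
  intros HB HnB. pose proof (good_mcs _ _ Hx) as HX.
  destruct (mcs_box_counter _ HX B HnB) as [Y [HY [HXY [HnYB HYB]]]].
  pose proof (strict_succ_of_new_box _ _ B HY HXY HB HYB HnYB) as Hs.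
  exists (mk_node ((Y, tag (obls x)) :: path x) (obls x)). split; [|split].
  - apply child_good; auto. apply coherent_cons; [apply Hx| |].
    + intros C HC. destruct (no_own_obligation Fb x C Hx HC).
    + intros [|c Cs] D HCs HD; [apply HXY, (mcs_J6 _ HX), HD|].
      destruct (no_own_obligation Fb x c Hx (HCs c (or_introl eq_refl))).
  - apply (child_R Fb); auto. apply incl_refl.
  - exact HnYB.
Qed.

Lemma rhd_witness B C :
  In (Neg B) Fb -> ~ tip (path x) (Rhd B C) ->
  exists y, good_node Fb y /\ node_R x y /\ tip (path y) B /\
    forall z, node_R x z -> node_S y z -> ~ tip (path z) C.
Proof.
  intros HB HnBC. pose proof (good_mcs _ _ Hx) as HX.
  destruct (mcs_rhd_counter _ HX B C HnBC) as [Y [HY [HXY [HYB [HYnB [HYnC HYD]]]]]].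
  pose proof (strict_succ_of_new_box _ _ (Neg B) HY HXY HB HYnB
                (fun H => mcs_not _ HY B H HYB)) as Hs.
  set (O := obls x ++ [(path x, C)]).
  exists (mk_node ((Y, tag O) :: path x) O). split; [|split; [|split]].
  - apply child_good; auto. apply coherent_cons; [apply coherent_add_own, Hx| |].
    + intros C' HC'. destruct (in_app_or _ _ _ HC') as [H|[H|[]]];
        [destruct (no_own_obligation Fb x C' Hx H)|injection H as <-; exact HYnC].
    + intros Cs D HCs HD. apply HYD, (mcs_R1 _ HX) with (big_or Cs); [|exact HD].
      apply big_or_elim. intros c Hc.
      destruct (in_app_or _ _ _ (HCs c Hc)) as [H|[H|[]]];
        [destruct (no_own_obligation Fb x c Hx H)|injection H as <-; apply ax_taut; taut].
  - apply (child_R Fb); auto. apply incl_appl, incl_refl.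
  - exact HYB.
  - intros z [[r [e Hz]] _] [_ Hres]. apply (Hres (path x) C); [|exists r, e; exact Hz].
    apply in_or_app; right; left; reflexivity.
Qed.

Lemma rhd_successor y B C :
  good_node Fb y -> node_R x y -> tip (path x) (Rhd B C) -> tip (path y) B -> In (Neg C) Fb ->
  exists z, good_node Fb z /\ node_R x z /\ node_S y z /\ tip (path z) C.
Proof.
  intros Hy [[r0 [e0 Hxy]] [Hinc _]] HBC HB HC. pose proof (good_mcs _ _ Hx) as HX.
  destruct (mcs_rhd_target _ HX (fun c => In (path x, c) (obls y)) B C HBC)
    as [Z [HZ [HXZ [HZC [HZnC [HZob HZD]]]]]].
  - intros Cs HCs HBCs.
    destruct (proj2 (good_coherent _ _ Hy) (path x) r0 e0 Cs B Hxy HCs HBCs) as [HnB HbnB].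
    apply (mcs_not _ (good_mcs _ _ Hy) B); [|exact HB].
    pose proof (good_chain _ _ Hy) as Hch. rewrite Hxy in Hch |- *.
    exact (succ_chain_persist Fb r0 e0 _ _ Hch HnB HbnB).
  - pose proof (strict_succ_of_new_box _ _ (Neg C) HZ HXZ HC HZnC
                  (fun H => mcs_not _ HZ C H HZC)) as Hs.
    assert (Hcoh : coherent (path x) (obls y)).
    { apply coherent_suffix with (r0 ++ [e0]). rewrite <- app_assoc; simpl. rewrite <- Hxy.
      apply Hy. }
    exists (mk_node ((Z, tag (obls y)) :: path x) (obls y)). split; [|split; [|split]].
    + apply child_good; auto. apply coherent_cons; [exact Hcoh| |]; [apply HZob|exact HZD].
    + apply (child_R Fb); auto.
    + split; [apply incl_refl|]. apply respects_cons with Fb; auto; [apply Hx|apply HZob].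
    + exact HZC.
Qed.

End Witnesses.

(** * Truth lemma and completeness *)

Fixpoint box_bodies (A : formula) : list formula :=
  match A with
  | Imp B C | Or B C | And B C => box_bodies B ++ box_bodies C
  | Box B => B :: box_bodies B
  | Rhd B C => Neg B :: Neg C :: box_bodies B ++ box_bodies C
  | _ => []
  end.

Definition canonical_val Fb (v : world Fb) (n : nat) : Prop := tip (path (proj1_sig v)) (Var n).

Lemma truth_lemma Fb M0 H0 A : incl (box_bodies A) Fb ->
  forall v, forces (canonical_frame Fb M0 H0) (canonical_val Fb) v A <-> tip (path (proj1_sig v)) A.
Proof.
  induction A; intros Hinc [v Hv]; pose proof (good_mcs _ _ Hv) as HX; simpl in *.
  - unfold canonical_val; simpl; tauto.
  - split; [intros _; apply (mcs_top _ HX)|tauto].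
  - split; [tauto|apply (mcs_bot _ HX)].
  - apply incl_app_inv in Hinc as [H1 H2].
    rewrite (mcs_imp _ HX), (IHA1 H1 (exist _ v Hv)), (IHA2 H2 (exist _ v Hv)). reflexivity.
  - apply incl_app_inv in Hinc as [H1 H2].
    rewrite (mcs_or _ HX), (IHA1 H1 (exist _ v Hv)), (IHA2 H2 (exist _ v Hv)). reflexivity.
  - apply incl_app_inv in Hinc as [H1 H2].
    rewrite (mcs_and _ HX), (IHA1 H1 (exist _ v Hv)), (IHA2 H2 (exist _ v Hv)). reflexivity.
  - apply incl_cons_inv in Hinc as [HA H1]. split.
    + intro H. apply NNPP. intro Hn.
      destruct (box_witness Fb v Hv A HA Hn) as [y [Hy [Rvy HyA]]].
      apply HyA, (IHA H1 (exist _ y Hy)), H. exact Rvy.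
    + intros HB [y Hy] Rvy. apply (IHA H1 (exist _ y Hy)). simpl in Rvy |- *.
      exact (proj1 (proj1 (node_R_strict_succ Fb v y Hv Hy Rvy) A HB)).
  - apply incl_cons_inv in Hinc as [HnA1 Hinc]. apply incl_cons_inv in Hinc as [HnA2 Hinc].
    apply incl_app_inv in Hinc as [H1 H2]. split.
    + intro H. apply NNPP. intro Hn.
      destruct (rhd_witness Fb v Hv A1 A2 HnA1 Hn) as [y [Hy [Rvy [HyA Hno]]]].
      destruct (H (exist _ y Hy) Rvy) as [[z Hz] [Rvz [Syz HzA]]];
        [apply (IHA1 H1 (exist _ y Hy)), HyA|].
      exact (Hno z Rvz Syz (proj1 (IHA2 H2 (exist _ z Hz)) HzA)).
    + intros HAA [y Hy] Rvy HyA. apply (IHA1 H1 (exist _ y Hy)) in HyA.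
      destruct (rhd_successor Fb v Hv y A1 A2 Hy Rvy HAA HyA HnA2) as [z [Hz [Rvz [Syz HzA]]]].
      exists (exist _ z Hz). split; [exact Rvz|split; [exact Syz|]].
      apply (IHA2 H2 (exist _ z Hz)), HzA.
Qed.

Theorem theorem3p3 (A : formula) :
  prv A <-> (forall F : sframe, valid_in F A).
Proof.
  split; [apply prv_sound|]. intro Hvalid. apply NNPP. intro HnA.
  destruct (lindenbaum _ (consistent_neg A HnA)) as [M0 [H0 HM0]].
  pose proof (Hvalid (canonical_frame (box_bodies A) M0 H0) (canonical_val (box_bodies A))
                (exist _ (mk_node [(M0, 0)] []) (root_good _ M0 H0))) as HA.
  apply (truth_lemma (box_bodies A) M0 H0 A (incl_refl _)) in HA.
  exact (mcs_not _ H0 A (HM0 _ eq_refl) HA).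
Qed.
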